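(* Let $\Gamma$ be a typing context, $e, e'$ terms and $A$ a type of the language $\widetilde{F}$ described in the context. If $\Gamma\vdash e:A$ and $e\to e'$ (one step of the small-step call-by-value reduction), then $\Gamma\vdash e':A$.
   Context: $\widetilde{F}$ is a higher-order functional array language. Types: $T ::= M \mid T_1\Rightarrow\cdots\Rightarrow T_n\Rightarrow M$ (function types, no currying), $M ::= \mathrm{Num}\mid \mathrm{Array}\langle M\rangle \mid M\times M\mid \mathrm{Bool}$, $\mathrm{Num}::=\mathrm{Double}\mid\mathrm{Index}$. Terms: $e ::= e\,e_1\cdots e_n \mid \lambda x_1\cdots x_n.\,e \mid x \mid r \mid i \mid \mathrm{true}\mid\mathrm{false}\mid c \mid \mathrm{let}\ x=e\ \mathrm{in}\ e \mid \mathrm{if}\ e\ \mathrm{then}\ e\ \mathrm{else}\ e \mid [e,\dots,e]\mid \bot$, where $r$ are real constants (type Double), $i$ index constants (type Index), and $\bot$ is a divergence term available at every type. Typing rules: (App) if $e_0: T_1\Rightarrow\cdots\Rightarrow T_n\Rightarrow M$ and $e_k:T_k$ then $e_0\,e_1\cdots e_n:M$; (Abs) if $\Gamma, x_1:T_1,\dots,x_n:T_n\vdash e:M$ then $\Gamma\vdash\lambda x_1\cdots x_n.e: T_1\Rightarrow\cdots\Rightarrow T_n\Rightarrow M$; (Var) $x:T\in\Gamma$ gives $\Gamma\vdash x:T$; (Let) $\Gamma\vdash e_1:T_1$ and $\Gamma,x:T_1\vdash e_2:T_2$ give $\Gamma\vdash \mathrm{let}\ x=e_1\ \mathrm{in}\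 e_2:T_2$; (If) $e_1:\mathrm{Bool}$, $e_2:M$, $e_3:M$ give $\mathrm{if}\ e_1\ \mathrm{then}\ e_2\ \mathrm{else}\ e_3:M$. Unary operators $\mathrm{op}_1$ (e.g. $-:\mathrm{Num}\Rightarrow\mathrm{Num}$; $\sin,\cos,\tan,\log,\exp:\mathrm{Double}\Rightarrow\mathrm{Double}$; $\mathrm{not}:\mathrm{Bool}\Rightarrow\mathrm{Bool}$) and binary operators $\mathrm{op}_2$ ($+,-,*,/,**:\mathrm{Num}\Rightarrow\mathrm{Num}\Rightarrow\mathrm{Num}$; $>,<,==,<>:\mathrm{Num}\Rightarrow\mathrm{Num}\Rightarrow\mathrm{Bool}$; $\&\&,||:\mathrm{Bool}\Rightarrow\mathrm{Bool}\Rightarrow\mathrm{Bool}$) are given by typing rules of the form: if $\Gamma\vdash e:A$ then $\Gamma\vdash\mathrm{op}_1(e):B$ for $\mathrm{op}_1:A\Rightarrow B$, and similarly for $\mathrm{op}_2(e_1,e_2)$. Further constants: $\mathrm{build}:\mathrm{Index}\Rightarrow(\mathrm{Index}\Rightarrow M)\Rightarrow\mathrm{Array}\langle M\rangle$, $\mathrm{ifold}:(M\Rightarrow\mathrm{Index}\Rightarrow M)\Rightarrow M\Rightarrow\mathrm{Index}\Rightarrow M$, $\mathrm{get}:\mathrm{Array}\langle M\rangle\Rightarrow\mathrm{Index}\Rightarrow M$, $\mathrm{length}:\mathrm{Array}\langle M\rangle\Rightarrow\mathrm{Index}$, $\mathrm{pair}:M_1\Rightarrow M_2\Rightarrow M_1\times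 M_2$ (written $(e_0,e_1)$), $\mathrm{fst}:M_1\times M_2\Rightarrow M_1$, $\mathrm{snd}:M_1\times M_2\Rightarrow M_2$. Values: $v::= r\mid i\mid\mathrm{true}\mid\mathrm{false}\mid (v_0,v_1)\mid \lambda x_1\cdots x_n.e\mid [v_0,\dots,v_{n-1}]$. Small-step call-by-value reduction $\to$ (left-to-right evaluation of arguments): congruence rules $e\to e'\Rightarrow e\,e_1\to e'\,e_1$; $e_0\to e_0'\Rightarrow v\,e_0\to v\,e_0'$; $\mathrm{op}_1(e)\to\mathrm{op}_1(e')$; $\mathrm{op}_2(e_0,e_1)\to\mathrm{op}_2(e_0',e_1)$; $\mathrm{op}_2(v,e_0)\to\mathrm{op}_2(v,e_0')$; $\mathrm{let}\ x=e_0\ \mathrm{in}\ e_1\to\mathrm{let}\ x=e_0'\ \mathrm{in}\ e_1$; and axioms $(\lambda x.e)\,v\to e[v/x]$; $\mathrm{let}\ x=v\ \mathrm{in}\ e\to e[v/x]$; $\mathrm{fst}(v_0,v_1)\to v_0$; $\mathrm{snd}(v_0,v_1)\to v_1$; $\mathrm{if\ true\ then}\ e_0\ \mathrm{else}\ e_1\to e_0$; $\mathrm{if\ false\ then}\ e_0\ \mathrm{else}\ e_1\to e_1$; $\mathrm{op}_1(\underline v)\to\underline{\mathrm{op}_1(v)}$ if $v\in\mathrm{Dom}(\mathrm{op}_1)$ and $\to\bot$ otherwise; $\mathrm{op}_2(\underline{v_0},\underline{v_1})\to\underline{\mathrm{op}_2(v_0,v_1)}$ if $(v_0,v_1)\in\mathrm{Dom}(\mathrm{op}_2)$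 and $\to\bot$ otherwise ($\mathrm{Dom}$ is the standard domain of definition, e.g. $\mathrm{Dom}(\tan)=\{v\in\mathbb R:\cos v\neq0\}$); $\mathrm{get}([v_0,\dots,v_{n-1}])(i)\to v_i$ for $0\le i<n$; $\mathrm{length}([v_0,\dots,v_{n-1}])\to n$; $\mathrm{build}(n)(\lambda x.e)\to[e[0/x],\dots,e[n-1/x]]$; $\mathrm{ifold}(v)(v_0)(0)\to v_0$; $\mathrm{ifold}(v)(v_0)(i+1)\to v(\mathrm{ifold}(v)(v_0)(i))(i)$. Any construct with an argument reducing to $\bot$ reduces to $\bot$. *)

From Stdlib Require Import Reals ZArith List.
Import ListNotations.
Open Scope R_scope.

Inductive gty : Type :=
| TDouble | TIndex | TBool
| TArray (M : gty)
| TProd (M1 M2 : gty).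

(* T ::= M | T1 => ... => Tn => M   (n >= 1, no currying):
   TFun T1 [T2;...;Tn] M  represents  T1 => T2 => ... => Tn => M. *)
Inductive ty : Type :=
| TG (M : gty)
| TFun (T1 : ty) (Ts : list ty) (M : gty).

Inductive const : Type :=
| CBuild | CIfold | CGet | CLength | CPair | CFst | CSnd.

Inductive op1 : Type := ONeg | OSin | OCos | OTan | OLog | OExp | ONot.
Inductive op2 : Type :=
| OAdd | OSub | OMul | ODiv | OPow
| OGt | OLt | OEq | ONeq
| OAnd | OOr.

(* Variables are de Bruijn indices.  [Abs n e] binds n variables x1..xn
   (xn has index 0 in e); [Let e1 e2] binds one variable in e2. *)
Inductive tm : Type :=
| Var (k : nat)
| App (f : tm) (args : list tm)
| Abs (n : nat) (body : tm)
| RealC (r : R)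
| IdxC (i : Z)
| BoolC (b : bool)
| Const (c : const)
| Let (e1 e2 : tm)
| If (c e1 e2 : tm)
| Arr (es : list tm)
| Bot
| Op1 (o : op1) (e : tm)
| Op2 (o : op2) (e1 e2 : tm).

Definition ctx := list ty.

Inductive const_ty : const -> ty -> Prop :=
| CT_Build M :
    const_ty CBuild (TFun (TG TIndex) [TFun (TG TIndex) [] M] (TArray M))
| CT_Ifold M :
    const_ty CIfold (TFun (TFun (TG M) [TG TIndex] M) [TG M; TG TIndex] M)
| CT_Get M : const_ty CGet (TFun (TG (TArray M)) [TG TIndex] M)
| CT_Length M : const_ty CLength (TFun (TG (TArray M)) [] TIndex)
| CT_Pair M1 M2 : const_ty CPair (TFun (TG M1) [TG M2] (TProd M1 M2))
| CT_Fst M1 M2 : const_ty CFst (TFun (TG (TProd M1 M2)) [] M1)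
| CT_Snd M1 M2 : const_ty CSnd (TFun (TG (TProd M1 M2)) [] M2).

Inductive op1_ty : op1 -> gty -> gty -> Prop :=
| O1_NegD : op1_ty ONeg TDouble TDouble
| O1_NegI : op1_ty ONeg TIndex TIndex
| O1_Sin : op1_ty OSin TDouble TDouble
| O1_Cos : op1_ty OCos TDouble TDouble
| O1_Tan : op1_ty OTan TDouble TDouble
| O1_Log : op1_ty OLog TDouble TDouble
| O1_Exp : op1_ty OExp TDouble TDouble
| O1_Not : op1_ty ONot TBool TBool.

Definition is_num (A : gty) : Prop := A = TDouble \/ A = TIndex.

Inductive op2_ty : op2 -> gty -> gty -> gty -> Prop :=
| O2_Arith o N : In o [OAdd; OSub; OMul; ODiv; OPow] -> is_num N ->
    op2_ty o N N N
| O2_Cmp o N : In o [OGt; OLt; OEq; ONeq] -> is_num N ->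
    op2_ty o N N TBool
| O2_Bool o : In o [OAnd; OOr] -> op2_ty o TBool TBool TBool.

Inductive has_type : ctx -> tm -> ty -> Prop :=
| T_Var G k T : nth_error G k = Some T -> has_type G (Var k) T
| T_App G e0 args T1 Ts M :
    has_type G e0 (TFun T1 Ts M) ->
    Forall2 (has_type G) args (T1 :: Ts) ->
    has_type G (App e0 args) (TG M)
| T_Abs G e T1 Ts M :
    has_type (rev (T1 :: Ts) ++ G) e (TG M) ->
    has_type G (Abs (S (length Ts)) e) (TFun T1 Ts M)
| T_Real G r : has_type G (RealC r) (TG TDouble)
| T_Idx G i : has_type G (IdxC i) (TG TIndex)
| T_Bool G b : has_type G (BoolC b) (TG TBool)
| T_Const G c T : const_ty c T -> has_type G (Const c) T
| T_Let G e1 e2 T1 T2 :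
    has_type G e1 T1 -> has_type (T1 :: G) e2 T2 -> has_type G (Let e1 e2) T2
| T_If G e1 e2 e3 M :
    has_type G e1 (TG TBool) -> has_type G e2 (TG M) -> has_type G e3 (TG M) ->
    has_type G (If e1 e2 e3) (TG M)
| T_Arr G es M :
    Forall (fun e => has_type G e (TG M)) es -> has_type G (Arr es) (TG (TArray M))
| T_Bot G T : has_type G Bot T
| T_Op1 G o e A B : op1_ty o A B -> has_type G e (TG A) -> has_type G (Op1 o e) (TG B)
| T_Op2 G o e1 e2 A1 A2 B :
    op2_ty o A1 A2 B -> has_type G e1 (TG A1) -> has_type G e2 (TG A2) ->
    has_type G (Op2 o e1 e2) (TG B).

Definition upren (n : nat) (xi : nat -> nat) : nat -> nat :=
  fun k => if Nat.ltb k n then k else (n + xi (k - n))%nat.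

Fixpoint ren (xi : nat -> nat) (t : tm) : tm :=
  match t with
  | Var k => Var (xi k)
  | App f args => App (ren xi f) (map (ren xi) args)
  | Abs n b => Abs n (ren (upren n xi) b)
  | RealC r => RealC r
  | IdxC i => IdxC i
  | BoolC b => BoolC b
  | Const c => Const c
  | Let e1 e2 => Let (ren xi e1) (ren (upren 1 xi) e2)
  | If c a b => If (ren xi c) (ren xi a) (ren xi b)
  | Arr es => Arr (map (ren xi) es)
  | Bot => Bot
  | Op1 o e => Op1 o (ren xi e)
  | Op2 o a b => Op2 o (ren xi a) (ren xi b)
  end.

Definition upsub (n : nat) (sigma : nat -> tm) : nat -> tm :=
  fun k => if Nat.ltb k n then Var k else ren (fun j => (n + j)%nat) (sigma (k - n)%nat).

Fixpoint subst (sigma : nat -> tm) (t : tm) : tm :=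
  match t with
  | Var k => sigma k
  | App f args => App (subst sigma f) (map (subst sigma) args)
  | Abs n b => Abs n (subst (upsub n sigma) b)
  | RealC r => RealC r
  | IdxC i => IdxC i
  | BoolC b => BoolC b
  | Const c => Const c
  | Let e1 e2 => Let (subst sigma e1) (subst (upsub 1 sigma) e2)
  | If c a b => If (subst sigma c) (subst sigma a) (subst sigma b)
  | Arr es => Arr (map (subst sigma) es)
  | Bot => Bot
  | Op1 o e => Op1 o (subst sigma e)
  | Op2 o a b => Op2 o (subst sigma a) (subst sigma b)
  end.

(* e[v1/x1, ..., vn/xn] for the n binders of an abstraction *)
Definition beta_sub (vs : list tm) : nat -> tm :=
  fun k => if Nat.ltb k (length vs) then nth k (rev vs) Bot
           else Var (k - length vs)%nat.

Definition single_sub (v : tm) : nat -> tm :=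
  fun k => match k with 0 => v | S j => Var j end.

Inductive value : tm -> Prop :=
| V_Real r : value (RealC r)
| V_Idx i : value (IdxC i)
| V_Bool b : value (BoolC b)
| V_Pair v0 v1 : value v0 -> value v1 -> value (App (Const CPair) [v0; v1])
| V_Abs n e : value (Abs n e)
| V_Arr vs : Forall value vs -> value (Arr vs)
| V_Const c : value (Const c).

(* scalar constants  (the underlined values of the operator rules) *)
Inductive lit : tm -> Prop :=
| L_Real r : lit (RealC r)
| L_Idx i : lit (IdxC i)
| L_Bool b : lit (BoolC b).

Definition Rbool (b : bool) : option tm := Some (BoolC b).

Definition eval_op1 (o : op1) (v : tm) : option tm :=
  match o, v with
  | ONeg, RealC r => Some (RealC (- r))
  | ONeg, IdxC i => Some (IdxC (- i)%Z)
  | OSin, RealC r => Some (RealC (sin r))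
  | OCos, RealC r => Some (RealC (cos r))
  | OTan, RealC r => if Req_EM_T (cos r) 0 then None else Some (RealC (tan r))
  | OLog, RealC r => if Rlt_dec 0 r then Some (RealC (ln r)) else None
  | OExp, RealC r => Some (RealC (exp r))
  | ONot, BoolC b => Some (BoolC (negb b))
  | _, _ => None
  end.

Definition Reqb (x y : R) : bool := if Req_EM_T x y then true else false.
Definition Rltb (x y : R) : bool := if Rlt_dec x y then true else false.

Definition eval_op2 (o : op2) (v1 v2 : tm) : option tm :=
  match o, v1, v2 with
  | OAdd, RealC x, RealC y => Some (RealC (x + y))
  | OSub, RealC x, RealC y => Some (RealC (x - y))
  | OMul, RealC x, RealC y => Some (RealC (x * y))
  | ODiv, RealC x, RealC y => if Req_EM_T y 0 then None else Some (RealC (x / y))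
  | OPow, RealC x, RealC y => if Rlt_dec 0 x then Some (RealC (Rpower x y)) else None
  | OGt, RealC x, RealC y => Some (BoolC (Rltb y x))
  | OLt, RealC x, RealC y => Some (BoolC (Rltb x y))
  | OEq, RealC x, RealC y => Some (BoolC (Reqb x y))
  | ONeq, RealC x, RealC y => Some (BoolC (negb (Reqb x y)))
  | OAdd, IdxC x, IdxC y => Some (IdxC (x + y)%Z)
  | OSub, IdxC x, IdxC y => Some (IdxC (x - y)%Z)
  | OMul, IdxC x, IdxC y => Some (IdxC (x * y)%Z)
  | ODiv, IdxC x, IdxC y => if Z.eqb y 0 then None else Some (IdxC (x / y)%Z)
  | OPow, IdxC x, IdxC y => if Z.ltb y 0 then None else Some (IdxC (x ^ y)%Z)
  | OGt, IdxC x, IdxC y => Some (BoolC (Z.ltb y x))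
  | OLt, IdxC x, IdxC y => Some (BoolC (Z.ltb x y))
  | OEq, IdxC x, IdxC y => Some (BoolC (Z.eqb x y))
  | ONeq, IdxC x, IdxC y => Some (BoolC (negb (Z.eqb x y)))
  | OAnd, BoolC a, BoolC b => Some (BoolC (andb a b))
  | OOr, BoolC a, BoolC b => Some (BoolC (orb a b))
  | _, _, _ => None
  end.

Definition or_bot (r : option tm) : tm :=
  match r with Some w => w | None => Bot end.

Inductive step : tm -> tm -> Prop :=
| S_AppHead e e' es : step e e' -> step (App e es) (App e' es)
| S_AppArg v vs e e' es :
    value v -> Forall value vs -> step e e' ->
    step (App v (vs ++ e :: es)) (App v (vs ++ e' :: es))
| S_Op1 o e e' : step e e' -> step (Op1 o e) (Op1 o e')
| S_Op2L o e0 e0' e1 : step e0 e0' -> step (Op2 o e0 e1) (Op2 o e0' e1)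
| S_Op2R o v e0 e0' : value v -> step e0 e0' -> step (Op2 o v e0) (Op2 o v e0')
| S_Let e0 e0' e1 : step e0 e0' -> step (Let e0 e1) (Let e0' e1)
| S_If e0 e0' e1 e2 : step e0 e0' -> step (If e0 e1 e2) (If e0' e1 e2)
| S_Arr vs e e' es :
    Forall value vs -> step e e' -> step (Arr (vs ++ e :: es)) (Arr (vs ++ e' :: es))
| S_Beta n e vs :
    Forall value vs -> length vs = n ->
    step (App (Abs n e) vs) (subst (beta_sub vs) e)
| S_LetV v e : value v -> step (Let v e) (subst (single_sub v) e)
| S_Fst v0 v1 : value v0 -> value v1 ->
    step (App (Const CFst) [App (Const CPair) [v0; v1]]) v0
| S_Snd v0 v1 : value v0 -> value v1 ->
    step (App (Const CSnd) [App (Const CPair) [v0; v1]]) v1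
| S_IfT e0 e1 : step (If (BoolC true) e0 e1) e0
| S_IfF e0 e1 : step (If (BoolC false) e0 e1) e1
| S_Op1V o v : lit v -> step (Op1 o v) (or_bot (eval_op1 o v))
| S_Op2V o v0 v1 : lit v0 -> lit v1 -> step (Op2 o v0 v1) (or_bot (eval_op2 o v0 v1))
| S_Get vs i : Forall value vs -> (0 <= i < Z.of_nat (length vs))%Z ->
    step (App (Const CGet) [Arr vs; IdxC i]) (nth (Z.to_nat i) vs Bot)
| S_Length vs : Forall value vs ->
    step (App (Const CLength) [Arr vs]) (IdxC (Z.of_nat (length vs)))
| S_Build n e : (0 <= n)%Z ->
    step (App (Const CBuild) [IdxC n; Abs 1 e])
         (Arr (map (fun j => subst (single_sub (IdxC (Z.of_nat j))) e)
                   (seq 0 (Z.to_nat n))))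
| S_Ifold0 v v0 : value v -> value v0 ->
    step (App (Const CIfold) [v; v0; IdxC 0]) v0
| S_IfoldS v v0 i : value v -> value v0 -> (0 <= i)%Z ->
    step (App (Const CIfold) [v; v0; IdxC (i + 1)])
         (App v [App (Const CIfold) [v; v0; IdxC i]; IdxC i])
| S_BotAppHead es : step (App Bot es) Bot
| S_BotAppArg v vs es :
    value v -> Forall value vs -> step (App v (vs ++ Bot :: es)) Bot
| S_BotOp1 o : step (Op1 o Bot) Bot
| S_BotOp2L o e1 : step (Op2 o Bot e1) Bot
| S_BotOp2R o v : value v -> step (Op2 o v Bot) Bot
| S_BotLet e1 : step (Let Bot e1) Bot
| S_BotIf e1 e2 : step (If Bot e1 e2) Bot
| S_BotArr vs es : Forall value vs -> step (Arr (vs ++ Bot :: es)) Bot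
| S_BotAppHead' e es : step e Bot -> step (App e es) Bot
| S_BotAppArg' v vs e es :
    value v -> Forall value vs -> step e Bot -> step (App v (vs ++ e :: es)) Bot
| S_BotOp1' o e : step e Bot -> step (Op1 o e) Bot
| S_BotOp2L' o e0 e1 : step e0 Bot -> step (Op2 o e0 e1) Bot
| S_BotOp2R' o v e : value v -> step e Bot -> step (Op2 o v e) Bot
| S_BotLet' e0 e1 : step e0 Bot -> step (Let e0 e1) Bot
| S_BotIf' e0 e1 e2 : step e0 Bot -> step (If e0 e1 e2) Bot
| S_BotArr' vs e es : Forall value vs -> step e Bot -> step (Arr (vs ++ e :: es)) Bot.

From Stdlib Require Import Reals ZArith List Lia.
Import ListNotations.
Local Open Scope nat_scope.

(** Typing is preserved by well-typed substitutions, which is proved first for renamings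
    since substituting under a binder shifts the substituted terms.  Subject reduction then
    follows by induction on the step: congruence rules by the induction hypothesis, the
    beta- and let-rules by the substitution lemma, the primitive rules by inverting the
    typing of the redex, and every [Bot] contractum is typable at any type. *)

(** The automatically generated [has_type_ind] gives no induction hypotheses for the
    premises nested under [Forall] and [Forall2]. *)
Section HasTypeInd.

Variable P : ctx -> tm -> ty -> Prop.

Hypothesis HVar : forall G k T, nth_error G k = Some T -> P G (Var k) T.
Hypothesis HApp : forall G e0 args T1 Ts M,
  P G e0 (TFun T1 Ts M) -> Forall2 (P G) args (T1 :: Ts) -> P G (App e0 args) (TG M).
Hypothesis HAbs : forall G e T1 Ts M,
  P (rev (T1 :: Ts) ++ G) e (TG M) -> P G (Abs (S (length Ts)) e) (TFun T1 Ts M).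
Hypothesis HReal : forall G r, P G (RealC r) (TG TDouble).
Hypothesis HIdx : forall G i, P G (IdxC i) (TG TIndex).
Hypothesis HBool : forall G b, P G (BoolC b) (TG TBool).
Hypothesis HConst : forall G c T, const_ty c T -> P G (Const c) T.
Hypothesis HLet : forall G e1 e2 T1 T2,
  P G e1 T1 -> P (T1 :: G) e2 T2 -> P G (Let e1 e2) T2.
Hypothesis HIf : forall G e1 e2 e3 M,
  P G e1 (TG TBool) -> P G e2 (TG M) -> P G e3 (TG M) -> P G (If e1 e2 e3) (TG M).
Hypothesis HArr : forall G es M,
  Forall (fun e => P G e (TG M)) es -> P G (Arr es) (TG (TArray M)).
Hypothesis HBot : forall G T, P G Bot T.
Hypothesis HOp1 : forall G o e A B, op1_ty o A B -> P G e (TG A) -> P G (Op1 o e) (TG B).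
Hypothesis HOp2 : forall G o e1 e2 A1 A2 B,
  op2_ty o A1 A2 B -> P G e1 (TG A1) -> P G e2 (TG A2) -> P G (Op2 o e1 e2) (TG B).

Fixpoint has_type_nested_ind G e T (H : has_type G e T) {struct H} : P G e T :=
  match H in has_type G e T return P G e T with
  | T_Var G k T h => HVar G k T h
  | T_App G e0 args T1 Ts M h0 hs =>
      HApp G e0 args T1 Ts M (has_type_nested_ind _ _ _ h0)
        ((fix all2 l L (h : Forall2 (has_type G) l L) : Forall2 (P G) l L :=
            match h in Forall2 _ l L return Forall2 (P G) l L with
            | Forall2_nil _ => Forall2_nil _
            | Forall2_cons _ _ hx hl =>
                Forall2_cons _ _ (has_type_nested_ind _ _ _ hx) (all2 _ _ hl)
            end) args (T1 :: Ts) hs)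
  | T_Abs G e T1 Ts M h => HAbs G e T1 Ts M (has_type_nested_ind _ _ _ h)
  | T_Real G r => HReal G r
  | T_Idx G i => HIdx G i
  | T_Bool G b => HBool G b
  | T_Const G c T h => HConst G c T h
  | T_Let G e1 e2 T1 T2 h1 h2 =>
      HLet G e1 e2 T1 T2 (has_type_nested_ind _ _ _ h1) (has_type_nested_ind _ _ _ h2)
  | T_If G e1 e2 e3 M h1 h2 h3 =>
      HIf G e1 e2 e3 M (has_type_nested_ind _ _ _ h1) (has_type_nested_ind _ _ _ h2)
        (has_type_nested_ind _ _ _ h3)
  | T_Arr G es M hs =>
      HArr G es M
        ((fix all l (h : Forall (fun e => has_type G e (TG M)) l)
            : Forall (fun e => P G e (TG M)) l :=
            match h in Forall _ l return Forall (fun e => P G e (TG M)) l with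
            | Forall_nil _ => Forall_nil _
            | Forall_cons _ hx hl => Forall_cons _ (has_type_nested_ind _ _ _ hx) (all _ hl)
            end) es hs)
  | T_Bot G T => HBot G T
  | T_Op1 G o e A B ho h => HOp1 G o e A B ho (has_type_nested_ind _ _ _ h)
  | T_Op2 G o e1 e2 A1 A2 B ho h1 h2 =>
      HOp2 G o e1 e2 A1 A2 B ho (has_type_nested_ind _ _ _ h1) (has_type_nested_ind _ _ _ h2)
  end.

End HasTypeInd.

Lemma Forall_replace_mid {A} (P : A -> Prop) l1 l2 x x' :
  Forall P (l1 ++ x :: l2) -> (P x -> P x') -> Forall P (l1 ++ x' :: l2).
Proof.
  rewrite !Forall_app, !Forall_cons_iff; intros (H1 & Hx & H2) Hxx'; auto.
Qed.

Lemma Forall2_replace_mid {A B} (R : A -> B -> Prop) l1 l2 x x' L :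
  Forall2 R (l1 ++ x :: l2) L -> (forall y, R x y -> R x' y) ->
  Forall2 R (l1 ++ x' :: l2) L.
Proof.
  revert L; induction l1 as [|a l1 IH]; simpl; intros L H Hxx';
    inversion H; subst; constructor; auto.
Qed.

Lemma Forall2_rev {A B} (R : A -> B -> Prop) l L :
  Forall2 R l L -> Forall2 R (rev l) (rev L).
Proof. induction 1; simpl; auto using Forall2_app. Qed.

Lemma Forall2_nth {A B} (R : A -> B -> Prop) l L d k y :
  Forall2 R l L -> nth_error L k = Some y -> R (nth k l d) y.
Proof.
  intros H; revert k; induction H as [|x y' l L Hxy _ IH]; intros [|k] Hk;
    simpl in *; try discriminate; auto.
  now injection Hk as <-.
Qed.

Definition well_typed_ren (xi : nat -> nat) (G G' : ctx) : Prop :=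
  forall k T, nth_error G k = Some T -> nth_error G' (xi k) = Some T.

Definition well_typed_subst (sigma : nat -> tm) (G G' : ctx) : Prop :=
  forall k T, nth_error G k = Some T -> has_type G' (sigma k) T.

Lemma upren_well_typed n xi (D G G' : ctx) : length D = n ->
  well_typed_ren xi G G' -> well_typed_ren (upren n xi) (D ++ G) (D ++ G').
Proof.
  intros <- Hxi k T Hk; unfold upren.
  destruct (Nat.ltb_spec k (length D)).
  - rewrite nth_error_app1 in * by lia; exact Hk.
  - rewrite nth_error_app2 in Hk by lia.
    rewrite nth_error_app2, Nat.add_comm, Nat.add_sub by lia; auto.
Qed.

Lemma ren_has_type G e T : has_type G e T ->
  forall xi G', well_typed_ren xi G G' -> has_type G' (ren xi e) T.
Proof.
  induction 1 as [| ? ? ? ? ? ? IH0 IHargs | ? ? T1 Ts ? IH | | | | | ? ? ? T1 ? IH1 IH2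
                  | | ? ? ? IHes | | |] using has_type_nested_ind;
    intros xi G' Hxi; simpl; try (econstructor; eauto; fail).
  - econstructor; eauto.
    induction IHargs; constructor; auto.
  - constructor; apply IH, upren_well_typed; [apply length_rev | exact Hxi].
  - econstructor; eauto. apply IH2, (upren_well_typed _ _ [T1]); auto.
  - constructor. induction IHes; constructor; auto.
Qed.

Lemma shift_well_typed (D G : ctx) :
  well_typed_ren (fun j => length D + j) G (D ++ G).
Proof.
  intros k T Hk; rewrite nth_error_app2, Nat.add_comm, Nat.add_sub by lia; exact Hk.
Qed.

Lemma upsub_well_typed n sigma (D G G' : ctx) : length D = n ->
  well_typed_subst sigma G G' -> well_typed_subst (upsub n sigma) (D ++ G) (D ++ G').
Proof.
  intros <- Hs k T Hk; unfold upsub.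
  destruct (Nat.ltb_spec k (length D)).
  - constructor; rewrite nth_error_app1 in * by lia; exact Hk.
  - rewrite nth_error_app2 in Hk by lia.
    eapply ren_has_type; [apply Hs, Hk | apply shift_well_typed].
Qed.

Lemma subst_has_type G e T : has_type G e T ->
  forall sigma G', well_typed_subst sigma G G' -> has_type G' (subst sigma e) T.
Proof.
  induction 1 as [| ? ? ? ? ? ? IH0 IHargs | ? ? T1 Ts ? IH | | | | | ? ? ? T1 ? IH1 IH2
                  | | ? ? ? IHes | | |] using has_type_nested_ind;
    intros sigma G' Hs; simpl; try solve [apply Hs; auto | econstructor; eauto].
  - econstructor; eauto.
    induction IHargs; constructor; auto.
  - constructor; apply IH, upsub_well_typed; [apply length_rev | exact Hs].
  - econstructor; eauto. apply IH2, (upsub_well_typed _ _ [T1]); auto.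
  - constructor. induction IHes; constructor; auto.
Qed.

Lemma beta_sub_well_typed G vs L :
  Forall2 (has_type G) vs L -> well_typed_subst (beta_sub vs) (rev L ++ G) G.
Proof.
  intros Hvs k T Hk; unfold beta_sub.
  rewrite (Forall2_length Hvs), <- (length_rev L).
  destruct (Nat.ltb_spec k (length (rev L))).
  - rewrite nth_error_app1 in Hk by lia.
    exact (Forall2_nth _ _ _ _ _ _ (Forall2_rev _ _ _ Hvs) Hk).
  - rewrite nth_error_app2 in Hk by lia; constructor; exact Hk.
Qed.

Lemma single_sub_well_typed G v T :
  has_type G v T -> well_typed_subst (single_sub v) (T :: G) G.
Proof.
  intros Hv [|k] U Hk; simpl in *.
  - now injection Hk as <-.
  - now constructor.
Qed.

Lemma preservation_beta G n e vs A :
  has_type G (App (Abs n e) vs) A -> has_type G (subst (beta_sub vs) e) A.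
Proof.
  intros H; inversion H as [| ? ? ? T1 Ts M Habs Hvs | | | | | | | | | | |]; subst.
  inversion Habs; subst.
  eapply subst_has_type; [eassumption | exact (beta_sub_well_typed _ _ _ Hvs)].
Qed.

Lemma preservation_let G v e A :
  has_type G (Let v e) A -> has_type G (subst (single_sub v) e) A.
Proof.
  intros H; inversion H; subst.
  eapply subst_has_type; eauto using single_sub_well_typed.
Qed.

Ltac invert_app :=
  repeat match goal with
  | H : has_type _ (App _ _) _ |- _ => inversion H; subst; clear H
  | H : has_type _ (Const _) _ |- _ => inversion H; subst; clear H
  | H : has_type _ (Abs _ _) _ |- _ => inversion H; subst; clear H
  | H : has_type _ (Arr _) _ |- _ => inversion H; subst; clear H
  | H : const_ty _ _ |- _ => inversion H; subst; clear H
  | H : Forall2 _ (_ :: _) _ |- _ => inversion H; subst; clear H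
  | H : Forall2 _ [] _ |- _ => inversion H; subst; clear H
  end.

Lemma preservation_fst G v0 v1 A :
  has_type G (App (Const CFst) [App (Const CPair) [v0; v1]]) A -> has_type G v0 A.
Proof. intros H; invert_app; assumption. Qed.

Lemma preservation_snd G v0 v1 A :
  has_type G (App (Const CSnd) [App (Const CPair) [v0; v1]]) A -> has_type G v1 A.
Proof. intros H; invert_app; assumption. Qed.

Lemma preservation_get G vs i k A :
  has_type G (App (Const CGet) [Arr vs; i]) A -> has_type G (nth k vs Bot) A.
Proof.
  intros H; invert_app.
  destruct (Nat.lt_ge_cases k (length vs)).
  - rewrite Forall_nth in *; auto.
  - rewrite nth_overflow by assumption; constructor.
Qed.

Lemma preservation_length G e n A :
  has_type G (App (Const CLength) [e]) A -> has_type G (IdxC n) A.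
Proof. intros H; invert_app; constructor. Qed.

Lemma preservation_build G n e js A :
  has_type G (App (Const CBuild) [n; Abs 1 e]) A ->
  has_type G (Arr (map (fun j => subst (single_sub (IdxC (Z.of_nat j))) e) js)) A.
Proof.
  intros H; invert_app.
  constructor; apply Forall_map, Forall_forall; intros j _.
  eapply subst_has_type; [eassumption | apply single_sub_well_typed; constructor].
Qed.

Lemma preservation_ifold0 G f v0 n A :
  has_type G (App (Const CIfold) [f; v0; n]) A -> has_type G v0 A.
Proof. intros H; invert_app; assumption. Qed.

Lemma preservation_ifoldS G f v0 n i A :
  has_type G (App (Const CIfold) [f; v0; n]) A ->
  has_type G (App f [App (Const CIfold) [f; v0; IdxC i]; IdxC i]) A.
Proof.
  intros H; invert_app.
  econstructor; [eassumption | constructor; [| repeat constructor]].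
  econstructor; [apply T_Const, CT_Ifold | repeat constructor; assumption].
Qed.

Lemma preservation_op1 G o v A :
  lit v -> has_type G (Op1 o v) A -> has_type G (or_bot (eval_op1 o v)) A.
Proof.
  intros Hv H; inversion H as [| | | | | | | | | | |? ? ? A0 B Ho Hty|]; subst.
  destruct Hv; inversion Hty; subst; inversion Ho; subst; simpl;
    repeat (destruct (Req_EM_T _ _) || destruct (Rlt_dec _ _)); constructor.
Qed.

Lemma preservation_op2 G o v1 v2 A :
  lit v1 -> lit v2 -> has_type G (Op2 o v1 v2) A ->
  has_type G (or_bot (eval_op2 o v1 v2)) A.
Proof.
  intros Hv1 Hv2 H; inversion H as [| | | | | | | | | | | |? ? ? ? A1 A2 B Ho Hty1 Hty2]; subst.
  destruct Hv1; inversion Hty1; subst; destruct Hv2; inversion Hty2; subst;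
    inversion Ho as [? ? Hin Hnum | ? ? Hin Hnum | ? Hin]; subst;
    try (destruct Hnum; discriminate);
    repeat destruct Hin as [<- | Hin]; try contradiction; simpl;
    repeat (destruct (Req_EM_T _ _) || destruct (Rlt_dec _ _) || destruct (Z.eqb _ _)
            || destruct (Z.ltb _ _));
    constructor.
Qed.

Theorem lemma1 (G : ctx) (e e' : tm) (A : ty) :
  has_type G e A -> step e e' -> has_type G e' A.
Proof.
  intros Ht Hs; revert G A Ht.
  induction Hs; intros G A Ht; try apply T_Bot.
  all: try solve [inversion Ht; subst; econstructor; eauto].
  - inversion Ht; subst; econstructor; eauto using Forall2_replace_mid.
  - inversion Ht; subst; constructor; eauto using Forall_replace_mid.
  - eapply preservation_beta; eassumption.
  - eapply preservation_let; eassumption.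
  - eapply preservation_fst; eassumption.
  - eapply preservation_snd; eassumption.
  - inversion Ht; assumption.
  - inversion Ht; assumption.
  - apply preservation_op1; assumption.
  - apply preservation_op2; assumption.
  - eapply preservation_get; eassumption.
  - eapply preservation_length; eassumption.
  - eapply preservation_build; eassumption.
  - eapply preservation_ifold0; eassumption.
  - eapply preservation_ifoldS; eassumption.
Qed.
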